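(* Let $V\subset\mathcal{A}_0$ be compact and let $V^T$ be complete. Then $$V^T=\bigcup_{0<r<1}P_r(V^T)=\bigcup_{0<r<1}P_r\big([P_r(V)]^T\big).$$
   Context: $D=\{z:|z|<1\}$, $\overline D$ its closure. $\mathcal{A}$ is the space of functions $f(z)=\sum_{k\ge0}a_k(f)z^k$ analytic in $D$, with the topology of locally uniform convergence; $\mathcal{A}_0=\{f\in\mathcal{A}: a_0(f)=1\}$. $\mathcal{A}(\overline D)$ is the set of functions analytic in some disk $\{|z|<R\}$ with $R>1$, and $\mathcal{A}_0(\overline D)=\{g\in\mathcal{A}(\overline D):a_0(g)=1\}$. The Hadamard product is $(f*g)(z)=\sum_{k\ge0}a_k(f)a_k(g)z^k$. For $V\subset\mathcal{A}_0$, $V^T=\{g\in\mathcal{A}_0(\overline D): (f*g)(1)\ne0 \ \forall f\in V\}$. For $x\in\overline D$, $(P_xf)(z)=f(xz)$ and $P_x(W)=\{P_xf:f\in W\}$; a set $W$ is complete if $P_xf\in W$ for all $f\in W$, $x\in\overline D$. *)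

From Stdlib Require Import Reals.
From Coquelicot Require Import Coquelicot.
Open Scope R_scope.

(* A power series is represented by its coefficient sequence a : nat -> C;
   the associated function is z |-> sum_k a k * z^k. *)
Definition pseries := nat -> C.

Definition in_A (a : pseries) : Prop :=
  forall z : C, Cmod z < 1 -> ex_series (fun k => (a k * z ^ k)%C).

Definition in_A0 (a : pseries) : Prop := in_A a /\ a 0%nat = RtoC 1.

(* g in A(closed D): analytic in some disk |z| < R with R > 1. *)
Definition in_AD (a : pseries) : Prop :=
  exists R, 1 < R /\ forall z : C, Cmod z < R -> ex_series (fun k => (a k * z ^ k)%C).

Definition in_A0D (a : pseries) : Prop := in_AD a /\ a 0%nat = RtoC 1.

Definition hadamard (a b : pseries) : pseries := fun k => (a k * b k)%C.

Definition hadamard_at1_nonzero (a b : pseries) : Prop :=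
  exists s : C, is_series (hadamard a b) s /\ s <> RtoC 0.

Definition transp (V : pseries -> Prop) : pseries -> Prop :=
  fun g => in_A0D g /\ forall f, V f -> hadamard_at1_nonzero f g.

(* (P_x f)(z) = f(xz): coefficients a_k x^k *)
Definition Pop (x : C) (a : pseries) : pseries := fun k => (a k * x ^ k)%C.

Definition Pset (x : C) (W : pseries -> Prop) : pseries -> Prop :=
  fun g => exists h, W h /\ g = Pop x h.

Definition complete (W : pseries -> Prop) : Prop :=
  forall g x, W g -> Cmod x <= 1 -> W (Pop x g).

Definition lu_conv (fn : nat -> pseries) (f : pseries) : Prop :=
  forall r, 0 <= r < 1 -> forall eps, 0 < eps ->
  exists N, forall n, (N <= n)%nat -> forall z : C, Cmod z <= r ->
  forall u v, is_series (fun k => (fn n k * z ^ k)%C) u ->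
              is_series (fun k => (f k * z ^ k)%C) v ->
              Cmod (u - v)%C <= eps.

(* compactness in A (metrizable topology of locally uniform convergence):
   every sequence in V has a subsequence converging to an element of V *)
Definition compact_A (V : pseries -> Prop) : Prop :=
  forall fn : nat -> pseries, (forall n, V (fn n)) ->
  exists (phi : nat -> nat) (f : pseries),
    (forall n, (phi n < phi (S n))%nat) /\ V f /\ lu_conv (fun n => fn (phi n)) f.

From Stdlib Require Import Reals Lra Lia.
From Coquelicot Require Import Coquelicot.
From Stdlib Require Import Classical ClassicalEpsilon FunctionalExtensionality.
Open Scope R_scope.

(** If g is in V^T, then so is P_t g for some t > 1, whence g = P_(1/t) (P_t g); the identity
    (P_r f * h)(1) = (f * P_r h)(1) turns this into the second equality, and completeness gives
    the reverse inclusions. Were there no such t, we could pick t_n -> 1+ and f_n in V with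
    (f_n * P_(t_n) g)(1) = 0. By compactness a subsequence converges locally uniformly to some
    f in V. Cauchy estimates on a circle of radius rho < 1 (averaging over roots of unity) make
    rho^k a_k(f_n) converge to rho^k a_k(f) uniformly in k, and since g is analytic beyond a radius
    sigma with rho sigma > 1, the values (f_n * P_(t_n) g)(1) converge to (f * g)(1) <> 0. *)

Lemma is_series_Cmod_le (a : nat -> C) (b : nat -> R) (s : C) (B : R) :
  is_series a s -> is_series b B -> (forall n, Cmod (a n) <= b n) -> Cmod s <= B.
Proof.
  intros Ha Hb Hab.
  assert (Hnorm : is_lim_seq (fun N => norm (sum_n a N)) (norm s)).
  { apply (filterlim_comp _ _ _ (sum_n a) norm eventually (locally s)); [exact Ha|].
    apply (filterlim_norm (K := C_AbsRing) (V := C_NormedModule)). }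
  refine (is_lim_seq_le _ _ (norm s) B _ Hnorm Hb). intro N.
  eapply Rle_trans; [apply (norm_sum_n_m (K := C_AbsRing) (V := C_NormedModule))|].
  apply sum_n_m_le. exact Hab.
Qed.

Lemma ex_series_terms_bounded (a : nat -> C) : ex_series a -> exists M, forall n, Cmod (a n) <= M.
Proof.
  intros [s Hs].
  destruct (filterlim_bounded (sum_n a)) as [M HM]; [exists s; exact Hs|].
  exists (2 * M). intros [|n].
  - pose proof (HM 0%nat) as H0. rewrite sum_O in H0. change (Cmod (a 0%nat) <= M) in H0.
    pose proof (Cmod_ge_0 (a 0%nat)). lra.
  - replace (a (S n)) with (sum_n a (S n) - sum_n a n)%C
      by (rewrite sum_Sn; change (plus ?u ?v) with (u + v)%C; ring).
    pose proof (HM (S n)) as H1. pose proof (HM n) as H2.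
    change (Cmod (sum_n a (S n)) <= M) in H1. change (Cmod (sum_n a n) <= M) in H2.
    unfold Cminus. eapply Rle_trans; [apply Cmod_triangle|]. rewrite Cmod_opp. lra.
Qed.

Lemma is_series_sum_n (F : nat -> nat -> C) (s : nat -> C) (M : nat) :
  (forall j, is_series (F j) (s j)) ->
  is_series (fun l => sum_n (fun j => F j l) M) (sum_n s M).
Proof.
  intros HF. induction M as [|M IH].
  - rewrite sum_O. apply (is_series_ext (F 0%nat)); [intro l; now rewrite sum_O|apply HF].
  - rewrite sum_Sn. apply (is_series_ext (fun l => plus (sum_n (fun j => F j l) M) (F (S M) l))).
    + intro l. now rewrite sum_Sn.
    + now apply (is_series_plus (K := C_AbsRing) (V := C_NormedModule)).
Qed.

Lemma is_series_succ_mul_pow (q : R) :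
  0 <= q < 1 -> is_series (fun k => INR (S k) * q ^ k) (/ (1 - q) ^ 2).
Proof.
  intros Hq.
  assert (Hgeom : is_series (fun k => q ^ k) (/ (1 - q)))
    by (apply is_series_geom; rewrite Rabs_pos_eq; lra).
  assert (Habs : ex_series (fun k => Rabs (q ^ k))).
  { apply (ex_series_ext (fun k => q ^ k)).
    - intro n. symmetry. apply Rabs_pos_eq, pow_le. lra.
    - apply ex_series_geom. rewrite Rabs_pos_eq; lra. }
  replace (/ (1 - q) ^ 2) with (/ (1 - q) * / (1 - q)) by (field; lra).
  refine (is_series_ext _ _ _ _ (is_series_mult _ _ _ _ Hgeom Hgeom Habs Habs)). intro n.
  assert (Hpart : forall m, (m <= n)%nat ->
            sum_f_R0 (fun i => q ^ i * q ^ (n - i)) m = INR (S m) * q ^ n).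
  { induction m as [|m IH]; intros Hm.
    - simpl. rewrite Nat.sub_0_r. ring.
    - rewrite tech5, IH, <- pow_add by lia.
      replace (S m + (n - S m))%nat with n by lia. rewrite (S_INR (S m)). ring. }
  apply Hpart. lia.
Qed.

Lemma Cmod_sum_n_le (a : nat -> C) (b : R) (n : nat) :
  (forall j, Cmod (a j) <= b) -> Cmod (sum_n a n) <= INR (S n) * b.
Proof.
  intros Hb. rewrite <- sum_n_const.
  eapply Rle_trans; [apply (norm_sum_n_m (K := C_AbsRing) (V := C_NormedModule))|].
  apply sum_n_m_le. exact Hb.
Qed.

Lemma sum_n_RtoC (a : nat -> R) (n : nat) : sum_n (fun j => RtoC (a j)) n = RtoC (sum_n a n).
Proof.
  induction n as [|n IH]; [now rewrite !sum_O|].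
  rewrite !sum_Sn, IH. symmetry. apply RtoC_plus.
Qed.

Lemma sum_n_single {G : AbelianMonoid} (u : nat -> G) (k n : nat) :
  (k <= n)%nat -> (forall l, (l <= n)%nat -> l <> k -> u l = zero) -> sum_n u n = u k.
Proof.
  induction n as [|n IH]; intros Hk Hz.
  - replace k with 0%nat by lia. apply sum_O.
  - rewrite sum_Sn. destruct (Nat.eq_dec k (S n)) as [->|Hne].
    + rewrite (sum_n_ext_loc u (fun _ => zero)) by (intros l Hl; apply Hz; lia).
      unfold sum_n. now rewrite sum_n_m_const_zero, plus_zero_l.
    + rewrite IH, (Hz (S n)) by (lia || (intros; apply Hz; lia)). apply plus_zero_r.
Qed.

Lemma coef_bound_of_ex_series (a : pseries) (r : R) :
  0 <= r -> ex_series (fun k => (a k * RtoC r ^ k)%C) ->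
  exists A, 0 < A /\ forall k, Cmod (a k) * r ^ k <= A.
Proof.
  intros Hr Hser. destruct (ex_series_terms_bounded _ Hser) as [M HM].
  exists (Rmax 1 M). split; [apply (Rlt_le_trans _ 1); [lra|apply Rmax_l]|].
  intro k. eapply Rle_trans; [|apply Rmax_r].
  specialize (HM k). rewrite Cmod_mult, Cmod_pow, Cmod_R, Rabs_pos_eq in HM by lra. exact HM.
Qed.

Lemma in_A_coef_bound (a : pseries) (r : R) :
  in_A a -> 0 <= r < 1 -> exists A, 0 < A /\ forall k, Cmod (a k) * r ^ k <= A.
Proof.
  intros Ha Hr. apply coef_bound_of_ex_series; [lra|].
  apply Ha. rewrite Cmod_R, Rabs_pos_eq; lra.
Qed.

Lemma in_AD_coef_bound (a : pseries) :
  in_AD a -> exists sigma B, 1 < sigma /\ 0 < B /\ forall k, Cmod (a k) * sigma ^ k <= B.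
Proof.
  intros [R [HR Ha]].
  destruct (coef_bound_of_ex_series a ((1 + R) / 2)) as [B [HB0 HB]]; [lra| |].
  - apply Ha. rewrite Cmod_R, Rabs_pos_eq; lra.
  - exists ((1 + R) / 2), B. repeat split; auto. lra.
Qed.

Lemma Rmult_pow_le_geom (x y rho sigma t q X Y : R) (k : nat) :
  0 <= x -> 0 <= y -> 0 < rho -> 0 < sigma -> 0 <= t <= q * (rho * sigma) ->
  x * rho ^ k <= X -> y * sigma ^ k <= Y -> x * y * t ^ k <= X * Y * q ^ k.
Proof.
  intros Hx Hy Hrho Hsigma Ht HX HY.
  assert (0 < rho ^ k) by (apply pow_lt; lra).
  assert (0 < sigma ^ k) by (apply pow_lt; lra).
  assert (0 <= q) by (apply (Rmult_le_reg_r (rho * sigma)); nra).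
  assert (0 <= q ^ k) by (apply pow_le; lra).
  assert (t ^ k <= q ^ k * (rho ^ k * sigma ^ k)).
  { rewrite <- !Rpow_mult_distr. apply pow_incr. lra. }
  apply Rle_trans with ((x * rho ^ k) * (y * sigma ^ k) * q ^ k).
  - replace ((x * rho ^ k) * (y * sigma ^ k) * q ^ k)
      with (x * y * (q ^ k * (rho ^ k * sigma ^ k))) by ring.
    apply Rmult_le_compat_l; [nra|assumption].
  - apply Rmult_le_compat_r; [assumption|].
    apply Rmult_le_compat; try assumption; apply Rmult_le_pos; lra.
Qed.

Lemma Rinv_in_01 (x : R) : 1 < x -> 0 < / x < 1.
Proof.
  intros Hx. split; [apply Rinv_0_lt_compat; lra|].
  rewrite <- Rinv_1. apply Rinv_lt_contravar; lra.
Qed.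

Lemma nonneg_of_Cmod_mul_pow_le (a : pseries) (r A : R) :
  (forall k, Cmod (a k) * r ^ k <= A) -> 0 <= A.
Proof. intros HA. specialize (HA 0%nat). pose proof (Cmod_ge_0 (a 0%nat)). simpl in HA. lra. Qed.

Lemma exists_radius_mul_gt1 (sigma : R) : 1 < sigma -> exists rho, 0 < rho < 1 /\ 1 < rho * sigma.
Proof.
  intros Hsigma. exists ((1 + / sigma) / 2).
  pose proof (Rinv_in_01 sigma Hsigma).
  split; [lra|].
  replace ((1 + / sigma) / 2 * sigma) with ((sigma + 1) / 2) by (field; lra). lra.
Qed.

Lemma ex_series_hadamard (f h : pseries) : in_A f -> in_AD h -> ex_series (hadamard f h).
Proof.
  intros Hf Hh.
  destruct (in_AD_coef_bound h Hh) as [sigma [B [Hsigma [_ HB]]]].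
  destruct (exists_radius_mul_gt1 sigma Hsigma) as [rho [Hrho Hrs]].
  destruct (in_A_coef_bound f rho Hf ltac:(lra)) as [A [_ HA]].
  set (q := / (rho * sigma)).
  assert (Hq : 0 <= q < 1) by (pose proof (Rinv_in_01 _ Hrs); unfold q; lra).
  apply (ex_series_le (K := C_AbsRing) (V := C_CompleteNormedModule) _ (fun k => A * B * q ^ k)).
  - intro k. change (Cmod (f k * h k)%C <= A * B * q ^ k). rewrite Cmod_mult.
    rewrite <- (Rmult_1_r (Cmod (f k) * Cmod (h k))), <- (pow1 k).
    apply (Rmult_pow_le_geom _ _ rho sigma); try apply Cmod_ge_0; try lra; auto.
    unfold q. rewrite Rinv_l; lra.
  - apply (ex_series_scal_l (K := R_AbsRing) (V := R_NormedModule) (A * B) (fun k => q ^ k)).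
    apply ex_series_geom. rewrite Rabs_pos_eq; lra.
Qed.

Lemma Pop_Pop (x y : C) (a : pseries) : Pop x (Pop y a) = Pop (x * y) a.
Proof. apply functional_extensionality. intro k. unfold Pop. rewrite Cpow_mult_l. ring. Qed.

Lemma Pop_1 (a : pseries) : Pop 1 a = a.
Proof. apply functional_extensionality. intro k. unfold Pop. rewrite Cpow_1_l. ring. Qed.

Lemma hadamard_Pop (x : C) (f h : pseries) : hadamard f (Pop x h) = hadamard (Pop x f) h.
Proof. apply functional_extensionality. intro k. unfold hadamard, Pop. ring. Qed.

Lemma in_AD_Pop (x : C) (g : pseries) (R : R) :
  1 < R -> (forall z : C, Cmod z < R -> ex_series (fun k => (g k * z ^ k)%C)) ->
  Cmod x < R -> in_AD (Pop x g).
Proof.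
  intros HR Hg Hx.
  set (m := Rmax 1 (Cmod x)).
  assert (Hm : 1 <= m /\ Cmod x <= m) by (split; [apply Rmax_l|apply Rmax_r]).
  assert (HmR : m < R) by (unfold m; apply Rmax_lub_lt; lra).
  exists (R / m). split.
  - apply (Rmult_lt_reg_r m); [lra|]. unfold Rdiv. rewrite Rmult_assoc, Rinv_l; lra.
  - intros z Hz. apply (ex_series_ext (fun k => (g k * (x * z) ^ k)%C)).
    + intro k. unfold Pop. rewrite Cpow_mult_l. apply Cmult_assoc.
    + apply Hg. rewrite Cmod_mult.
      assert (Hzm : Cmod z * m < R)
        by (apply (Rmult_lt_reg_r (/ m)); [apply Rinv_0_lt_compat; lra|];
            replace (Cmod z * m * / m) with (Cmod z) by (field; lra); exact Hz).
      pose proof (Cmod_ge_0 z). nra.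
Qed.

Lemma Pop_0 (x : C) (a : pseries) : Pop x a 0%nat = a 0%nat.
Proof. unfold Pop. change (x ^ 0)%C with (RtoC 1). apply Cmult_1_r. Qed.

Lemma in_A0D_Pop (x : C) (g : pseries) :
  in_A0D g -> Cmod x <= 1 -> in_A0D (Pop x g).
Proof.
  intros [[R [HR Hg]] Hg0] Hx. split.
  - apply (in_AD_Pop x g R); auto. lra.
  - now rewrite Pop_0.
Qed.

(** * Cauchy estimates *)

Lemma sum_n_pow_root_of_unity (x : C) (M : nat) :
  (x ^ S M)%C = 1 -> x <> 1 -> sum_n (fun j => (x ^ j)%C) M = RtoC 0.
Proof.
  intros Hroot Hx1.
  assert (Hgeom : forall n, ((x - 1) * sum_n (fun j => (x ^ j)%C) n = x ^ S n - 1)%C).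
  { induction n as [|n IH].
    - rewrite sum_O. simpl. ring.
    - rewrite sum_Sn. change (plus ?u ?v) with (u + v)%C.
      rewrite Cmult_plus_distr_l, IH. simpl. ring. }
  assert (Hx : (x - 1)%C <> 0) by (intro H; apply Hx1; rewrite <- (Cplus_0_l 1), <- H; ring).
  rewrite <- (Cmult_1_l (sum_n _ M)), <- (Cinv_l (x - 1)), <- Cmult_assoc, Hgeom, Hroot by exact Hx.
  change (/ (x - 1) * (1 - 1) = 0)%C. ring.
Qed.

Definition cis (t : R) : C := (cos t, sin t).

Lemma cis_add (s t : R) : cis (s + t) = (cis s * cis t)%C.
Proof. unfold cis, Cmult; simpl. rewrite cos_plus, sin_plus. f_equal; ring. Qed.

Lemma cis_pow (t : R) (n : nat) : (cis t ^ n)%C = cis (INR n * t).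
Proof.
  induction n as [|n IH].
  - simpl. rewrite Rmult_0_l. unfold cis. now rewrite cos_0, sin_0.
  - rewrite Cpow_S, IH, <- cis_add, S_INR. f_equal. ring.
Qed.

Lemma Cmod_cis (t : R) : Cmod (cis t) = 1.
Proof.
  unfold Cmod, cis. rewrite <- sqrt_1. f_equal. simpl fst; simpl snd.
  pose proof (sin2_cos2 t) as H. rewrite !Rsqr_pow2 in H. lra.
Qed.

Lemma cis_2PI_mult_INR (n : nat) (s : R) : s = 1 \/ s = -1 -> cis (s * (2 * PI * INR n)) = 1.
Proof.
  intros [-> | ->]; unfold cis.
  - replace (1 * (2 * PI * INR n)) with (0 + 2 * INR n * PI) by ring.
    now rewrite cos_period, sin_period, cos_0, sin_0.
  - replace (-1 * (2 * PI * INR n)) with (- (0 + 2 * INR n * PI)) by ring.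
    rewrite cos_neg, sin_neg, cos_period, sin_period, cos_0, sin_0, Ropp_0. reflexivity.
Qed.

Lemma cis_neq_1 (t : R) : - (2 * PI) < t < 2 * PI -> t <> 0 -> cis t <> 1.
Proof.
  intros Ht Ht0 Hcis. unfold cis in Hcis. injection Hcis as Hcos Hsin.
  destruct (sin_eq_0_0 t Hsin) as [m ->]. pose proof PI_RGT_0.
  assert (Hm : (-2 < m < 2)%Z) by (split; apply lt_IZR; simpl; nra).
  assert (m = 0 \/ m = 1 \/ m = -1)%Z as [-> | [-> | ->]] by lia.
  - apply Ht0. ring.
  - rewrite Rmult_1_l, cos_PI in Hcos. lra.
  - replace (IZR (-1) * PI) with (- PI) in Hcos by (simpl; ring).
    rewrite cos_neg, cos_PI in Hcos. lra.
Qed.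

Definition unity_root_sum (M k l : nat) : C :=
  sum_n (fun j => (cis ((INR l - INR k) * (2 * PI / INR (S M))) ^ j)%C) M.

Lemma unity_root_sum_diag (M k : nat) : unity_root_sum M k k = RtoC (INR (S M)).
Proof.
  unfold unity_root_sum. rewrite Rminus_diag, Rmult_0_l.
  rewrite (sum_n_ext _ (fun _ => RtoC 1)), sum_n_RtoC, sum_n_const, Rmult_1_r; [reflexivity|].
  intro j. unfold cis. rewrite cos_0, sin_0. apply Cpow_1_l.
Qed.

Lemma Cmod_unity_root_sum_le (M k l : nat) : Cmod (unity_root_sum M k l) <= INR (S M).
Proof.
  rewrite <- (Rmult_1_r (INR (S M))). apply Cmod_sum_n_le.
  intro j. rewrite Cmod_pow, Cmod_cis, pow1. lra.
Qed.

Lemma unity_root_sum_neq (M k l : nat) :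
  (k <= M)%nat -> (l <= M)%nat -> l <> k -> unity_root_sum M k l = RtoC 0.
Proof.
  intros Hk Hl Hlk. unfold unity_root_sum. pose proof PI_RGT_0.
  assert (HN : 0 < INR (S M)) by apply lt_0_INR, Nat.lt_0_succ.
  assert (Hk' : INR k < INR (S M)) by (apply lt_INR; lia).
  assert (Hl' : INR l < INR (S M)) by (apply lt_INR; lia).
  pose proof (pos_INR k). pose proof (pos_INR l).
  set (t := (INR l - INR k) * (2 * PI / INR (S M))).
  assert (HtN : t * INR (S M) = 2 * PI * INR l - 2 * PI * INR k) by (unfold t; field; lra).
  apply sum_n_pow_root_of_unity.
  - rewrite cis_pow, Rmult_comm, HtN.
    replace (2 * PI * INR l - 2 * PI * INR k)
      with (1 * (2 * PI * INR l) + -1 * (2 * PI * INR k)) by ring.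
    rewrite cis_add, !cis_2PI_mult_INR by auto. ring.
  - apply cis_neq_1.
    + split; apply (Rmult_lt_reg_r (INR (S M))); nra.
    + intro Ht0. rewrite Ht0, Rmult_0_l in HtN.
      apply Hlk, INR_eq. nra.
Qed.

(* Average of the series over the points rho w^j, w = cis (2 PI / (M + 1)), with weights w^(-jk). *)
Lemma circle_average_series (c : pseries) (rho eps : R) (k M : nat) :
  0 <= rho ->
  (forall z : C, Cmod z = rho ->
     exists s, is_series (fun l => (c l * z ^ l)%C) s /\ Cmod s <= eps) ->
  exists T, Cmod T <= INR (S M) * eps /\
    is_series (fun l => (c l * RtoC (rho ^ l) * unity_root_sum M k l)%C) T.
Proof.
  intros Hrho Hcirc.
  set (theta := 2 * PI / INR (S M)).
  set (z := fun j : nat => (RtoC rho * cis (INR j * theta))%C).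
  destruct (choice (fun j s => is_series (fun l => (c l * z j ^ l)%C) s /\ Cmod s <= eps))
    as [s Hs].
  { intro j. apply Hcirc. unfold z. rewrite Cmod_mult, Cmod_cis, Cmod_R, Rabs_pos_eq; lra. }
  set (w := fun j : nat => cis (- (INR j * INR k * theta))).
  exists (sum_n (fun j => (w j * s j)%C) M). split.
  - apply Cmod_sum_n_le. intro j. unfold w. rewrite Cmod_mult, Cmod_cis, Rmult_1_l. apply Hs.
  - apply (is_series_ext (fun l => sum_n (fun j => (w j * (c l * z j ^ l))%C) M)).
    + intro l. unfold unity_root_sum. fold theta. rewrite <- (sum_n_mult_l (K := C_Ring)).
      apply sum_n_ext. intro j.
      unfold w, z. rewrite Cpow_mult_l, !cis_pow, <- RtoC_pow.
      replace (INR j * ((INR l - INR k) * theta))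
        with (- (INR j * INR k * theta) + INR l * (INR j * theta)) by ring.
      rewrite cis_add. change (mult ?a ?b) with (a * b)%C.
      match goal with |- ?a = ?b => change (a = b :> C) end. ring.
    + apply is_series_sum_n. intro j.
      apply (is_series_scal_l (K := C_AbsRing) (V := C_NormedModule) (w j)). apply Hs.
Qed.

Lemma Rdiv_in_01 (a b : R) : 0 < a < b -> 0 < a / b < 1.
Proof.
  intros Hab. split; [apply Rdiv_lt_0_compat; lra|].
  apply (Rmult_lt_reg_r b); [lra|]. unfold Rdiv. rewrite Rmult_assoc, Rinv_l; lra.
Qed.

Lemma cauchy_estimate_trunc (c : pseries) (rho rho' K eps : R) (k M : nat) :
  0 < rho < rho' -> (forall l, Cmod (c l) * rho' ^ l <= K) ->
  (forall z : C, Cmod z = rho ->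
     exists s, is_series (fun l => (c l * z ^ l)%C) s /\ Cmod s <= eps) ->
  (k <= M)%nat ->
  Cmod (c k) * rho ^ k <= eps + K / (1 - rho / rho') * (rho / rho') ^ S M.
Proof.
  intros Hrho HK Hcirc HkM.
  destruct (circle_average_series c rho eps k M ltac:(lra) Hcirc) as [T [HTb HT]].
  set (u := fun l => (c l * RtoC (rho ^ l) * unity_root_sum M k l)%C) in HT.
  set (N := INR (S M)) in *.
  assert (HN : 0 < N) by apply lt_0_INR, Nat.lt_0_succ.
  set (q := rho / rho').
  assert (Hq : 0 < q < 1) by (apply Rdiv_in_01; lra).
  assert (Htail : is_series (fun j => u (S M + j)%nat) (T - u k)%C).
  { assert (Hpart : sum_n u M = u k).
    { apply (sum_n_single u k M HkM). intros l Hl Hlk.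
      unfold u. rewrite unity_root_sum_neq by assumption. apply Cmult_0_r. }
    apply is_series_incr_n; [lia|]. simpl pred.
    change (is_series u (T - u k + sum_n u M)%C).
    rewrite Hpart. replace (T - u k + u k)%C with T by ring. exact HT. }
  assert (Hcq : forall l, Cmod (c l) * rho ^ l <= K * q ^ l).
  { intro l. replace rho with (rho' * q) by (unfold q; field; lra).
    rewrite Rpow_mult_distr, <- Rmult_assoc.
    apply Rmult_le_compat_r; [apply pow_le; lra|apply HK]. }
  assert (Htailb : Cmod (T - u k) <= N * (K / (1 - q) * q ^ S M)).
  { apply (is_series_Cmod_le _ (fun j => N * K * q ^ S M * q ^ j) _ _ Htail).
    - replace (N * (K / (1 - q) * q ^ S M)) with (N * K * q ^ S M * / (1 - q)) by (field; lra).
      apply (is_series_scal_l (K := R_AbsRing) (V := R_NormedModule)).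
      apply is_series_geom. rewrite Rabs_pos_eq; lra.
    - intro j. unfold u. rewrite !Cmod_mult, Cmod_R, Rabs_pos_eq by (apply pow_le; lra).
      replace (N * K * q ^ S M * q ^ j) with ((K * q ^ (S M + j)) * N) by (rewrite pow_add; ring).
      apply Rmult_le_compat; try apply Hcq.
      + apply Rmult_le_pos; [apply Cmod_ge_0|apply pow_le; lra].
      + apply Cmod_ge_0.
      + apply Cmod_unity_root_sum_le. }
  assert (Hsplit : Cmod (u k) <= Cmod T + Cmod (T - u k)).
  { pose proof (Cmod_triangle T (- (T - u k))) as Htri.
    rewrite Cmod_opp in Htri. replace (T + - (T - u k))%C with (u k) in Htri by ring. exact Htri. }
  assert (Hmod : Cmod (u k) = N * (Cmod (c k) * rho ^ k)).
  { unfold u. rewrite unity_root_sum_diag, !Cmod_mult, !Cmod_R, (Rabs_pos_eq (INR _)),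
      Rabs_pos_eq by (apply pos_INR || (apply pow_le; lra)). fold N. ring. }
  apply (Rmult_le_reg_l N); [exact HN|]. lra.
Qed.

Lemma cauchy_estimate (c : pseries) (rho eps : R) :
  in_A c -> 0 < rho < 1 ->
  (forall z : C, Cmod z = rho ->
     exists s, is_series (fun l => (c l * z ^ l)%C) s /\ Cmod s <= eps) ->
  forall k, Cmod (c k) * rho ^ k <= eps.
Proof.
  intros Hc Hrho Hcirc k.
  set (rho' := (1 + rho) / 2).
  assert (Hrho' : rho < rho' < 1) by (unfold rho'; lra).
  destruct (in_A_coef_bound c rho' Hc ltac:(lra)) as [K [_ HK]].
  set (q := rho / rho').
  assert (Hq : 0 < q < 1) by (apply Rdiv_in_01; lra).
  set (C0 := K / (1 - q) * q ^ S k).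
  assert (Hlim : is_lim_seq (fun n => eps + C0 * q ^ n) eps).
  { replace (Finite eps) with (Finite (eps + 0)) by (f_equal; ring).
    apply is_lim_seq_plus'; [apply is_lim_seq_const|].
    replace (Finite 0) with (Rbar_mult C0 0) by (simpl; f_equal; ring).
    apply is_lim_seq_scal_l, is_lim_seq_geom. rewrite Rabs_pos_eq; lra. }
  change (Rbar_le (Cmod (c k) * rho ^ k) eps).
  refine (is_lim_seq_le _ _ _ _ _ (is_lim_seq_const _) Hlim). intro n.
  unfold C0. rewrite Rmult_assoc, <- pow_add. replace (S k + n)%nat with (S (k + n)) by lia.
  apply (cauchy_estimate_trunc c rho rho'); auto; [lra|lia].
Qed.

(** * Continuity of the Hadamard pairing under dilations *)

Lemma pow_sub_1_le (t : R) (k : nat) : 1 <= t -> t ^ k - 1 <= (t - 1) * INR k * t ^ k.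
Proof.
  intros Ht. induction k as [|k IH]; [simpl; lra|].
  rewrite S_INR. simpl pow.
  assert (1 <= t ^ k) by (apply pow_R1_Rle; lra).
  assert (t * (t ^ k - 1) <= t * ((t - 1) * INR k * t ^ k)) by (apply Rmult_le_compat_l; lra).
  assert (0 <= (t - 1) * (t * t ^ k - 1)) by (apply Rmult_le_pos; nra).
  nra.
Qed.

Lemma hadamard_Pop_term_le (f f1 g : pseries) (rho sigma q t A B eps : R) (k : nat) :
  0 < rho -> 0 < sigma -> 0 <= q -> 1 <= t <= q * (rho * sigma) -> 0 <= A -> 0 <= B ->
  Cmod (g k) * sigma ^ k <= B -> Cmod (f k) * rho ^ k <= A ->
  Cmod (f1 k - f k) * rho ^ k <= eps ->
  Cmod (hadamard f1 (Pop (RtoC t) g) k - hadamard f g k)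
    <= B * (eps + A * (t - 1)) * (INR (S k) * q ^ k).
Proof.
  intros Hrho Hsigma Hq Ht HA0 HB0 HB HA Heps.
  assert (Heps0 : 0 <= eps)
    by (pose proof (Rmult_le_pos _ _ (Cmod_ge_0 (f1 k - f k)) (pow_le rho k ltac:(lra))); lra).
  unfold hadamard, Pop. rewrite <- RtoC_pow.
  replace (f1 k * (g k * RtoC (t ^ k)) - f k * g k)%C
    with ((f1 k - f k) * g k * RtoC (t ^ k) + f k * g k * RtoC (t ^ k - 1))%C
    by (rewrite RtoC_minus; ring).
  assert (Htk : 1 <= t ^ k) by (apply pow_R1_Rle; lra).
  eapply Rle_trans; [apply Cmod_triangle|].
  rewrite !Cmod_mult, !Cmod_R, !Rabs_pos_eq by lra.
  assert (Hdiff : Cmod (f1 k - f k) * Cmod (g k) * t ^ k <= eps * B * q ^ k)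
    by (apply (Rmult_pow_le_geom _ _ rho sigma); try apply Cmod_ge_0; auto; lra).
  assert (Hfg : Cmod (f k) * Cmod (g k) * t ^ k <= A * B * q ^ k)
    by (apply (Rmult_pow_le_geom _ _ rho sigma); try apply Cmod_ge_0; auto; lra).
  assert (Hdil : Cmod (f k) * Cmod (g k) * (t ^ k - 1) <= (t - 1) * INR k * (A * B * q ^ k)).
  { pose proof (pow_sub_1_le t k (proj1 Ht)).
    pose proof (Rmult_le_pos _ _ (Cmod_ge_0 (f k)) (Cmod_ge_0 (g k))).
    apply Rle_trans with ((t - 1) * INR k * (Cmod (f k) * Cmod (g k) * t ^ k)).
    - replace ((t - 1) * INR k * (Cmod (f k) * Cmod (g k) * t ^ k))
        with (Cmod (f k) * Cmod (g k) * ((t - 1) * INR k * t ^ k)) by ring.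
      now apply Rmult_le_compat_l.
    - apply Rmult_le_compat_l; [apply Rmult_le_pos; [lra|apply pos_INR]|exact Hfg]. }
  pose proof (pos_INR k). pose proof (pow_le q k Hq).
  assert (0 <= (t - 1) * A * B * q ^ k) by (repeat apply Rmult_le_pos; lra).
  assert (0 <= eps * B * q ^ k * INR k) by (repeat apply Rmult_le_pos; lra).
  rewrite S_INR. nra.
Qed.

Lemma hadamard_Pop_sub_le (f f1 g : pseries) (rho sigma q t A B eps : R) (s s1 : C) :
  0 < rho -> 0 < sigma -> 0 <= q < 1 -> 1 <= t <= q * (rho * sigma) ->
  (forall k, Cmod (g k) * sigma ^ k <= B) ->
  (forall k, Cmod (f k) * rho ^ k <= A) ->
  (forall k, Cmod (f1 k - f k) * rho ^ k <= eps) ->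
  is_series (hadamard f1 (Pop (RtoC t) g)) s1 -> is_series (hadamard f g) s ->
  Cmod (s1 - s) <= B * (eps + A * (t - 1)) / (1 - q) ^ 2.
Proof.
  intros Hrho Hsigma Hq Ht HB HA Heps Hs1 Hs.
  apply (is_series_Cmod_le (fun k => hadamard f1 (Pop (RtoC t) g) k - hadamard f g k)%C
           (fun k => B * (eps + A * (t - 1)) * (INR (S k) * q ^ k))).
  - apply (is_series_minus (K := C_AbsRing) (V := C_NormedModule)); assumption.
  - unfold Rdiv. apply (is_series_scal_l (K := R_AbsRing) (V := R_NormedModule)).
    now apply is_series_succ_mul_pow.
  - intro k. apply (hadamard_Pop_term_le _ _ _ rho sigma); auto; try lra;
      eapply nonneg_of_Cmod_mul_pow_le; eassumption.
Qed.

Lemma in_A_sub (a b : pseries) : in_A a -> in_A b -> in_A (fun k => (a k - b k)%C).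
Proof.
  intros Ha Hb z Hz.
  apply (ex_series_ext (fun k => plus (a k * z ^ k)%C (opp (b k * z ^ k)%C))).
  - intro k. change (a k * z ^ k + - (b k * z ^ k) = (a k - b k) * z ^ k)%C. ring.
  - apply (ex_series_minus (K := C_AbsRing) (V := C_NormedModule)); auto.
Qed.

Lemma lu_conv_coef (fn : nat -> pseries) (f : pseries) (rho eps : R) :
  (forall n, in_A (fn n)) -> in_A f -> lu_conv fn f -> 0 < rho < 1 -> 0 < eps ->
  exists N, forall n, (N <= n)%nat -> forall k, Cmod (fn n k - f k) * rho ^ k <= eps.
Proof.
  intros Hfn Hf Hlu Hrho Heps.
  destruct (Hlu rho ltac:(lra) eps Heps) as [N HN].
  exists N. intros n Hn. apply cauchy_estimate; [now apply in_A_sub|assumption|].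
  intros z Hz.
  destruct (Hfn n z ltac:(lra)) as [u Hu]. destruct (Hf z ltac:(lra)) as [v Hv].
  exists (u - v)%C. split; [|apply (HN n Hn z ltac:(lra) u v Hu Hv)].
  apply (is_series_ext (fun k => plus (fn n k * z ^ k)%C (opp (f k * z ^ k)%C))).
  - intro k. change (fn n k * z ^ k + - (f k * z ^ k) = (fn n k - f k) * z ^ k)%C. ring.
  - apply (is_series_minus (K := C_AbsRing) (V := C_NormedModule)); assumption.
Qed.

Lemma hadamard_Pop_cvg (g f : pseries) (fn : nat -> pseries) (tn : nat -> R)
    (sn : nat -> C) (s : C) :
  in_AD g -> in_A f -> (forall n, in_A (fn n)) -> lu_conv fn f ->
  (forall n, 1 <= tn n) -> is_lim_seq tn 1 ->
  (forall n, is_series (hadamard (fn n) (Pop (RtoC (tn n)) g)) (sn n)) ->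
  is_series (hadamard f g) s ->
  forall eps, 0 < eps -> exists N, forall n, (N <= n)%nat -> Cmod (sn n - s) <= eps.
Proof.
  intros Hg Hf Hfn Hlu Htn1 Htn Hsn Hs eps Heps.
  destruct (in_AD_coef_bound g Hg) as [sigma [B [Hsigma [HB0 HB]]]].
  destruct (exists_radius_mul_gt1 sigma Hsigma) as [rho [Hrho Hrs]].
  set (q := (1 + / (rho * sigma)) / 2).
  pose proof (Rinv_in_01 _ Hrs) as Hinv.
  assert (Hq : 0 <= q < 1) by (unfold q; lra).
  assert (Hqrs : 1 < q * (rho * sigma)).
  { unfold q. replace ((1 + / (rho * sigma)) / 2 * (rho * sigma)) with ((rho * sigma + 1) / 2)
      by (field; lra). lra. }
  destruct (in_A_coef_bound f rho Hf ltac:(lra)) as [A [HA0 HA]].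
  assert (HW : 0 < (1 - q) ^ 2) by (apply pow_lt; lra).
  set (eta := eps * (1 - q) ^ 2 / (B * (1 + A))).
  assert (Heta : 0 < eta) by (unfold eta; apply Rdiv_lt_0_compat; nra).
  destruct (lu_conv_coef fn f rho eta Hfn Hf Hlu Hrho Heta) as [N1 HN1].
  assert (Hdelta : 0 < Rmin eta (q * (rho * sigma) - 1)) by (apply Rmin_pos; lra).
  destruct (proj2 (is_lim_seq_spec tn 1) Htn (mkposreal _ Hdelta)) as [N2 HN2].
  exists (Nat.max N1 N2). intros n Hn.
  specialize (HN2 n ltac:(lia)). simpl in HN2.
  pose proof (Rmin_l eta (q * (rho * sigma) - 1)).
  pose proof (Rmin_r eta (q * (rho * sigma) - 1)).
  pose proof (Htn1 n). rewrite Rabs_pos_eq in HN2 by lra.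
  eapply Rle_trans.
  - apply (hadamard_Pop_sub_le f (fn n) g rho sigma q (tn n) A B eta); try lra; auto.
    apply HN1. lia.
  - replace eps with (B * (eta + A * eta) / (1 - q) ^ 2) by (unfold eta; field; lra).
    apply Rmult_le_compat_r; [apply Rlt_le, Rinv_0_lt_compat; lra|].
    apply Rmult_le_compat_l; nra.
Qed.

Lemma transp_exists_Pop_gt1 (V : pseries -> Prop) (g : pseries) :
  (forall f, V f -> in_A0 f) -> compact_A V -> transp V g ->
  exists t, 1 < t /\ transp V (Pop (RtoC t) g).
Proof.
  intros HV Hc [Hg Hnz]. pose proof Hg as [[R [HR HgR]] Hg0].
  apply NNPP. intro Hnone.
  set (tn := fun n : nat => 1 + (R - 1) / 2 * (/ 2) ^ n).
  assert (Htn : forall n, 1 < tn n < R).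
  { intro n. assert (0 < (/ 2) ^ n <= 1).
    { split; [apply pow_lt; lra|rewrite <- (pow1 n); apply pow_incr; lra]. }
    unfold tn. split; nra. }
  assert (Hdil : forall n, in_A0D (Pop (RtoC (tn n)) g)).
  { intro n. split; [|now rewrite Pop_0].
    apply (in_AD_Pop _ g R HR HgR). rewrite Cmod_R, Rabs_pos_eq; specialize (Htn n); lra. }
  assert (Hbad : forall n, exists f, V f /\
            forall s, is_series (hadamard f (Pop (RtoC (tn n)) g)) s -> s = RtoC 0).
  { intro n. apply NNPP. intro Hn. apply Hnone. exists (tn n). split; [apply Htn|].
    split; [apply Hdil|]. intros f Hf. apply NNPP. intro Hf0. apply Hn.
    exists f. split; [exact Hf|]. intros s Hs. apply NNPP. intro Hs0. apply Hf0. now exists s. }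
  destruct (choice _ Hbad) as [fn Hfn].
  destruct (Hc fn (fun n => proj1 (Hfn n))) as [phi [f [Hphi [Hf Hlu]]]].
  destruct (Hnz f Hf) as [s [Hs Hs0]].
  destruct (choice (fun n sn =>
      is_series (hadamard (fn (phi n)) (Pop (RtoC (tn (phi n))) g)) sn)) as [sn Hsn].
  { intro n. apply ex_series_hadamard; [apply HV, Hfn|apply Hdil]. }
  assert (Hlim : is_lim_seq (fun n => tn (phi n)) 1).
  { apply (is_lim_seq_subseq tn 1 phi (eventually_subseq phi Hphi)).
    replace (Finite 1) with (Finite (1 + (R - 1) / 2 * 0)) by (f_equal; ring).
    apply is_lim_seq_plus'; [apply is_lim_seq_const|].
    replace (Finite ((R - 1) / 2 * 0)) with (Rbar_mult ((R - 1) / 2) 0) by reflexivity.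
    apply is_lim_seq_scal_l, is_lim_seq_geom. rewrite Rabs_pos_eq; lra. }
  assert (Hs_pos : 0 < Cmod s) by now apply Cmod_gt_0.
  destruct (hadamard_Pop_cvg g f (fun n => fn (phi n)) (fun n => tn (phi n)) sn s
              (proj1 Hg) (proj1 (HV f Hf)) (fun n => proj1 (HV _ (proj1 (Hfn (phi n)))))
              Hlu (fun n => Rlt_le _ _ (proj1 (Htn (phi n)))) Hlim Hsn Hs (Cmod s / 2))
    as [N HN]; [lra|].
  specialize (HN N (Nat.le_refl N)).
  rewrite (proj2 (Hfn (phi N)) (sn N) (Hsn N)) in HN.
  replace (0 - s)%C with (- s)%C in HN by ring. rewrite Cmod_opp in HN. lra.
Qed.

Lemma hadamard_at1_nonzero_Pop (x : C) (f h : pseries) :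
  hadamard_at1_nonzero (Pop x f) h <-> hadamard_at1_nonzero f (Pop x h).
Proof. unfold hadamard_at1_nonzero. now rewrite hadamard_Pop. Qed.

Lemma transp_Pset_iff (x : C) (V : pseries -> Prop) (h : pseries) :
  transp (Pset x V) h <-> in_A0D h /\ forall f, V f -> hadamard_at1_nonzero f (Pop x h).
Proof.
  split; intros [Hh Hnz]; split; auto.
  - intros f Hf. apply hadamard_at1_nonzero_Pop, Hnz. now exists f.
  - intros f' [f [Hf ->]]. now apply hadamard_at1_nonzero_Pop, Hnz.
Qed.

Lemma transp_eq_Pop_transp (V : pseries -> Prop) (g : pseries) :
  (forall f, V f -> in_A0 f) -> compact_A V -> transp V g ->
  exists r h, 0 < r < 1 /\ transp V h /\ g = Pop (RtoC r) h.
Proof.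
  intros HV Hc Hg. destruct (transp_exists_Pop_gt1 V g HV Hc Hg) as [t [Ht Hh]].
  exists (/ t), (Pop (RtoC t) g). split; [|split; [exact Hh|]].
  - now apply Rinv_in_01.
  - rewrite Pop_Pop, <- RtoC_mult, Rinv_l, Pop_1 by lra. reflexivity.
Qed.

Theorem theorem4 (V : pseries -> Prop) :
  (forall f, V f -> in_A0 f) ->
  compact_A V ->
  complete (transp V) ->
  (forall g, transp V g <-> exists r, 0 < r < 1 /\ Pset (RtoC r) (transp V) g) /\
  (forall g, transp V g <->
     exists r, 0 < r < 1 /\ Pset (RtoC r) (transp (Pset (RtoC r) V)) g).
Proof.
  intros HV Hc Hcomplete.
  assert (Hr : forall r, 0 < r < 1 -> Cmod (RtoC r) <= 1)
    by (intros r Hr; rewrite Cmod_R, Rabs_pos_eq; lra).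
  split; intro g; split.
  - intro Hg. destruct (transp_eq_Pop_transp V g HV Hc Hg) as [r [h [Hr1 [Hh ->]]]].
    exists r. split; [exact Hr1|]. now exists h.
  - intros [r [Hr1 [h [Hh ->]]]]. now apply Hcomplete, Hr.
  - intro Hg. destruct (transp_eq_Pop_transp V g HV Hc Hg) as [r [h [Hr1 [Hh Hgh]]]].
    exists r. split; [exact Hr1|]. exists h. split; [|exact Hgh].
    apply transp_Pset_iff. split; [apply Hh|]. rewrite <- Hgh. apply Hg.
  - intros [r [Hr1 [h [Hh ->]]]]. apply transp_Pset_iff in Hh as [Hh Hnz].
    split; [now apply in_A0D_Pop, Hr|exact Hnz].
Qed.
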